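(* Let $G$ be a finite group and let $H$ be a $2$-subgroup of $G$. Then $H$ is a perfect code of $G$ if and only if, for each $a\in N_G(H)\setminus H$ with $a^2\in H$, the subgroup $H$ has a complement in $H\langle a\rangle$.
   Context: For a group $G$ with identity $e$ and an inverse-closed subset $S\subseteq G\setminus\{e\}$, the Cayley graph $\mathrm{Cay}(G,S)$ has vertex set $G$ and edges $\{g,sg\}$ for $s\in S$, $g\in G$. A perfect code in a graph is an independent set $C$ of vertices such that every vertex outside $C$ is adjacent to exactly one vertex of $C$. A subgroup $H$ of $G$ is a perfect code of $G$ if some Cayley graph of $G$ admits $H$ as a perfect code. $N_G(H)$ is the normalizer of $H$ in $G$. *)

From mathcomp Require Import all_boot all_fingroup gproduct pgroup.
Set Implicit Arguments. Unset Strict Implicit. Unset Printing Implicit Defensive.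
Import GroupScope.
Local Open Scope group_scope.

(* Cayley graph Cay(G,S): vertex set G, edges {g, s g} for s in S, g in G.
   Thus x and y are adjacent iff y * x^-1 \in S (equivalently x * y^-1 \in S
   when S is inverse-closed). *)
Definition cay_adj (gT : finGroupType) (S : {set gT}) (x y : gT) : bool :=
  y * x^-1 \in S.

Definition connection_set (gT : finGroupType) (G S : {set gT}) : Prop :=
  S \subset G :\ 1 /\ (forall s, s \in S -> s^-1 \in S).

Definition cay_perfect_code (gT : finGroupType) (G S C : {set gT}) : Prop :=
  [/\ C \subset G,
      (forall c c', c \in C -> c' \in C -> ~~ cay_adj S c c') &
      (forall x, x \in G :\: C -> #|[set c in C | cay_adj S c x]| = 1%N)].

Definition subgroup_perfect_code (gT : finGroupType) (G H : {set gT}) : Prop :=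
  exists S : {set gT}, connection_set G S /\ cay_perfect_code G S H.

From mathcomp Require Import all_boot all_fingroup gproduct pgroup cyclic.
Set Implicit Arguments. Unset Strict Implicit. Unset Printing Implicit Defensive.
Import GroupScope.
Local Open Scope group_scope.

(* H is a perfect code of G exactly when G \ H contains an inverse-closed set S
   meeting every left coset of H other than H itself exactly once (S is the
   connection set). For a \in N(H) \ H with a^2 \in H, complements to H in
   H<a> correspond to involutions t \in aH (via K = <t>), and as aH is then
   closed under inversion, the representative of aH in S is such an involution.

   Conversely, given these involutions, S is built greedily. A coset xH with
   x \in N(H) and x^2 \in H receives an involution. Any other coset xH is paired
   with a second coset yH inside Hx^-1H: a left coset and a right coset of the
   same double coset always meet, so some g \in xH has g^-1 \in yH, and both g
   and g^-1 are chosen. A partner yH always exists because a double coset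
   D <> D^-1 keeps as many remaining cosets as D^-1, while a self-inverse double
   coset HxH outside N(H) consists of |H : H ∩ H^x| left cosets, an even number
   since H is a 2-group. *)

Section PerfectCode.
Variables (gT : finGroupType) (H : {group gT}).
Implicit Types (A R S T W : {set gT}) (a g t u w x y z : gT).

Lemma mem_lcoset_invg x : (x^-1 \in x *: H) = (x ^+ 2 \in H).
Proof. by rewrite mem_lcoset -invMg groupV expgS expg1. Qed.

Lemma lcoset_subset A x : A * H \subset A -> x \in A -> x *: H \subset A.
Proof. by move=> sAH Ax; apply: subset_trans sAH; rewrite mulSg ?sub1set. Qed.

Lemma lcoset_disjoint A x : A * H \subset A -> x \notin A -> [disjoint x *: H & A].
Proof.
move=> sAH; apply: contraR; rewrite -setI_eq0 => /set0Pn[u /setIP[ux Au]].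
by rewrite (subsetP (lcoset_subset sAH Au)) // lcoset_sym.
Qed.

Lemma card_lcosetI A x : A * H \subset A -> #|x *: H :&: A| = ((x \in A) * #|H|)%N.
Proof.
move=> sAH; have [Ax | nAx] := boolP (x \in A).
  by rewrite (setIidPl (lcoset_subset sAH Ax)) card_lcoset mul1n.
by rewrite disjoint_setI0 ?lcoset_disjoint ?cards0.
Qed.

Definition dcoset x : {set gT} := H :* x * H.

Lemma dcosetP x u :
  reflect (exists2 h1, h1 \in H & exists2 h2, h2 \in H & u = h1 * x * h2)
          (u \in dcoset x).
Proof.
apply: (iffP mulsgP) => [[v h2 /rcosetP[h1 Hh1 ->] Hh2 ->] | [h1 Hh1 [h2 Hh2 ->]]].
  by exists h1 => //; exists h2.
by exists (h1 * x) h2 => //; apply/rcosetP; exists h1.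
Qed.

Lemma mem_dcoset h1 h2 x : h1 \in H -> h2 \in H -> h1 * x * h2 \in dcoset x.
Proof. by move=> Hh1 Hh2; apply/dcosetP; exists h1 => //; exists h2. Qed.

Lemma dcoset_refl x : x \in dcoset x.
Proof. by have := mem_dcoset x (group1 H) (group1 H); rewrite mul1g mulg1. Qed.

Lemma dcoset_mulG x : dcoset x * H = dcoset x.
Proof. by rewrite -mulgA mulGid. Qed.

Lemma lcoset_sub_dcoset x : x *: H \subset dcoset x.
Proof. by rewrite lcoset_subset ?dcoset_refl ?dcoset_mulG. Qed.

Lemma dcosetV x : dcoset x^-1 = (dcoset x)^-1.
Proof. by rewrite /dcoset !invMg invGid invg_set1 mulgA. Qed.

Lemma mem_dcosetV x y : (x^-1 \in dcoset y) = (x \in dcoset y^-1).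
Proof. by rewrite dcosetV mem_invg. Qed.

Lemma dcoset_sym x y : (y \in dcoset x) = (x \in dcoset y).
Proof.
suff sym u v : v \in dcoset u -> u \in dcoset v by apply/idP/idP; apply: sym.
case/dcosetP=> h1 Hh1 [h2 Hh2 ->].
have {1}-> : u = h1^-1 * (h1 * u * h2) * h2^-1 by rewrite !mulgA mulVg mul1g mulgK.
by rewrite mem_dcoset ?groupV.
Qed.

Lemma dcoset_trans x y z : y \in dcoset x -> z \in dcoset y -> z \in dcoset x.
Proof.
case/dcosetP=> h1 Hh1 [h2 Hh2 ->] /dcosetP[k1 Hk1 [k2 Hk2 ->]].
have -> : k1 * (h1 * x * h2) * k2 = k1 * h1 * x * (h2 * k2) by rewrite !mulgA.
by rewrite mem_dcoset ?groupM.
Qed.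

Lemma dcoset_transl x y z : x \in dcoset y -> (x \in dcoset z) = (y \in dcoset z).
Proof.
move=> xy; apply/idP/idP => [xz | yz]; last exact: dcoset_trans yz xy.
by apply: dcoset_trans xz _; rewrite dcoset_sym.
Qed.

Lemma dcoset_eq x y : y \in dcoset x -> dcoset y = dcoset x.
Proof.
by move=> yx; apply/setP=> u; rewrite dcoset_sym (dcoset_transl u yx) dcoset_sym.
Qed.

Lemma dcoset_norm x : x \in 'N(H) -> dcoset x = x *: H.
Proof. by move=> nHx; rewrite /dcoset norm_rlcoset // -mulgA mulGid. Qed.

Lemma card_dcoset z : (#|dcoset z| * #|H :&: H :^ z^-1|)%N = (#|H| * #|H|)%N.
Proof.
have -> : dcoset z = (H * H :^ z^-1) :* z.
  by rewrite /dcoset conjsgE invgK -!mulgA mulg_set1 mulVg mulg1.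
by rewrite card_rcoset -(mul_cardG H (H :^ z^-1)%G) /= cardJg.
Qed.

Lemma dvdn_card_dcoset (p : nat) z :
  p.-group H -> z \notin 'N(H) -> (p * #|H|)%N %| #|dcoset z|.
Proof.
move=> pH nHz; set K := (H :&: H :^ z^-1)%G.
have sKH : K \subset H := subsetIl _ _.
have -> : #|dcoset z| = (#|H : K| * #|H|)%N.
  apply/eqP; rewrite -(eqn_pmul2r (cardG_gt0 K)) card_dcoset -{1}(Lagrange sKH).
  by rewrite -mulnA mulnC.
rewrite dvdn_pmul2r //.
have [[|k] iK] := p_natP (pnat_dvd (dvdn_indexg H K) pH); last first.
  by rewrite iK expnS dvdn_mulr.
move/eqP: iK; rewrite indexg_eq1 subsetI subxx /= -sub_conjg => sHzH.
case/negP: nHz; apply/normP/eqP.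
by rewrite eqEcard sHzH cardJg /=.
Qed.

Definition inv_transversal W S :=
  [/\ S \subset W, S^-1 = S & {in W, forall w, #|S :&: w *: H| = 1%N}].

Lemma inv_transversal_lcoset x t :
  t \in x *: H -> t^-1 = t -> inv_transversal (x *: H) [set t].
Proof.
move=> tx tV; split; rewrite ?sub1set ?invg_set1 ?tV // => w /lcoset_eqP->.
by rewrite (setIidPl _) ?cards1 ?sub1set.
Qed.

Lemma inv_transversal_lcosetU x y g : y \notin x *: H ->
  g \in x *: H -> g^-1 \in y *: H -> inv_transversal (x *: H :|: y *: H) [set g; g^-1].
Proof.
move=> nyx gx gVy.
have card_set2I u v A : u \in A -> v \notin A -> #|[set u; v] :&: A| = 1%N.
  move=> uA nvA; apply/eqP/cards1P; exists u; apply/setP=> w; rewrite !inE.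
  by case: eqVneq => [-> | _]; rewrite ?uA //=; case: eqVneq => // ->; rewrite (negbTE nvA).
have nyH u : u \in x *: H -> u \notin y *: H.
  by move=> ux; apply: contra nyx => uy; rewrite -(lcoset_eqP ux) (lcoset_eqP uy) lcoset_refl.
split.
- by rewrite subUset !sub1set !inE gx gVy orbT.
- by rewrite invUg !invg_set1 invgK setUC.
move=> w /setUP[] /lcoset_eqP->; first by rewrite card_set2I //; exact: contraL (nyH _) gVy.
by rewrite setUC card_set2I ?nyH.
Qed.

Lemma inv_transversalU W R T S : R \subset W -> R * H \subset R ->
  inv_transversal R T -> inv_transversal (W :\: R) S -> inv_transversal W (T :|: S).
Proof.
move=> sRW sRH_R [sTR TV cardT] [sSWR SV cardS]; split.
- by rewrite subUset (subset_trans sTR sRW) (subset_trans sSWR (subsetDl W R)).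
- by rewrite invUg TV SV.
move=> w Ww; rewrite setIUl; have [Rw | nRw] := boolP (w \in R).
  rewrite (_ : S :&: w *: H = set0) ?setU0 ?cardT //; apply/setP=> u; rewrite !inE.
  apply/negbTE/andP=> -[/(subsetP sSWR)/setDP[_ nRu] uw].
  by rewrite (subsetP (lcoset_subset sRH_R Rw)) in nRu.
rewrite (_ : T :&: w *: H = set0) ?set0U ?cardS ?inE ?nRw //.
rewrite setIC disjoint_setI0 // disjoint_sym (disjointWl sTR) //.
by rewrite disjoint_sym lcoset_disjoint.
Qed.

Definition pairable W :=
  [/\ W * H \subset W,
      forall z, #|W :&: dcoset z| = #|W :&: dcoset z^-1| &
      forall z, z^-1 \in dcoset z -> z \notin 'N(H) ->
        (2 * #|H|)%N %| #|W :&: dcoset z|].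

Lemma pairableD W R : R \subset W -> pairable W -> pairable R -> pairable (W :\: R).
Proof.
move=> sRW [sWH_W cardW evenW] [sRH_R cardR evenR].
have cardD A : #|(W :\: R) :&: A| = (#|W :&: A| - #|R :&: A|)%N.
  by rewrite setIDAC cardsD setIAC (setIidPr sRW).
split=> [|z|z zV nHz]; last 2 first.
- by rewrite !cardD cardW cardR.
- by rewrite cardD dvdn_sub ?evenW ?evenR.
apply/subsetP=> _ /mulsgP[u h /setDP[Wu nRu] Hh ->].
rewrite inE (subsetP sWH_W) ?mem_mulg ?andbT //; apply: contra nRu => Ruh.
by rewrite -(mulgK h u) (subsetP sRH_R) ?mem_mulg ?groupV.
Qed.

Lemma pairable_lcoset x : x \in 'N(H) -> x ^+ 2 \in H -> pairable (x *: H).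
Proof.
move=> nHx x2; have xVx : x^-1 \in dcoset x by rewrite dcoset_norm ?mem_lcoset_invg.
split=> [|z|z _ nHz]; rewrite ?card_lcosetI ?dcoset_mulG //.
- by rewrite -mulgA mulGid.
- by rewrite -mem_dcosetV (dcoset_transl z xVx).
rewrite (_ : x \in dcoset z = false) ?dvdn0 //; apply: contraNF nHz.
rewrite dcoset_sym dcoset_norm // => /lcosetP[h Hh ->].
by rewrite groupM // (subsetP (normG H)).
Qed.

Lemma pairable_lcosetU x y :
  y \in dcoset x^-1 -> y \notin x *: H -> pairable (x *: H :|: y *: H).
Proof.
move=> yxV nyx.
have yH_H : y *: H * H \subset y *: H by rewrite -mulgA mulGid.
have disj : [disjoint x *: H & y *: H] by rewrite lcoset_disjoint // lcoset_sym.
have cardU A : A * H \subset A ->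
    #|(x *: H :|: y *: H) :&: A| = ((x \in A) * #|H| + (y \in A) * #|H|)%N.
  move=> sAH_A; rewrite setIUl cardsU !card_lcosetI //.
  by rewrite disjoint_setI0 ?cards0 ?subn0 // (disjointW (subsetIl _ _) (subsetIl _ _)).
have yz z : (y \in dcoset z) = (x \in dcoset z^-1).
  by rewrite (dcoset_transl z yxV) mem_dcosetV.
split=> [|z|z zV _]; rewrite ?cardU ?dcoset_mulG //.
- by rewrite mulUg -!mulgA mulGid subxx.
- by rewrite !yz invgK addnC.
by rewrite yz (dcoset_eq zV) addnn -mul2n mulnCA dvdn_mull.
Qed.

Lemma pairable_setD (G : {group gT}) : H \subset G -> 2.-group H -> pairable (G :\: H).
Proof.
move=> sHG pH; split=> [|z|z _ nHz].
- apply/subsetP=> _ /mulsgP[u h /setDP[Gu nHu] Hh ->].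
  by rewrite inE groupMr // nHu groupM // (subsetP sHG).
- by rewrite dcosetV -card_invg invIg invDg !invGid.
have nHz' : z \notin H := contra (subsetP (normG H) z) nHz.
have [Gz | nGz] := boolP (z \in G).
  rewrite (setIidPr _) ?dvdn_card_dcoset //.
  apply/subsetP=> _ /dcosetP[h1 Hh1 [h2 Hh2 ->]].
  by rewrite inE groupMr // groupMl // nHz' !groupM // (subsetP sHG).
rewrite (_ : _ :&: _ = set0) ?cards0 ?dvdn0 //; apply/setP=> u; rewrite !inE.
apply/negbTE/andP=> -[/andP[_ Gu]]; rewrite dcoset_sym => /dcosetP[h1 Hh1 [h2 Hh2 zE]].
by move: nGz; rewrite zE !groupM // (subsetP sHG).
Qed.

Lemma pairable_partner W x : pairable W -> x \in W ->
    ~~ ((x \in 'N(H)) && (x ^+ 2 \in H)) ->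
  exists2 y, y \in W :&: dcoset x^-1 & y \notin x *: H.
Proof.
move=> [sWH_W cardW evenW] Wx notInv.
have xHW : x *: H \subset W := lcoset_subset sWH_W Wx.
have leHWx : (#|H| <= #|W :&: dcoset x|)%N.
  by rewrite -(card_lcoset H x) subset_leq_card // subsetI xHW lcoset_sub_dcoset.
have [xVx | xVnx] := boolP (x^-1 \in dcoset x).
  have nHx : x \notin 'N(H).
    by apply: contra notInv => nHx; rewrite nHx -mem_lcoset_invg -dcoset_norm.
  suff /subsetPn[y /setIP[Wy yx] nyx] : ~~ (W :&: dcoset x \subset x *: H).
    by exists y; rewrite // inE Wy (dcoset_eq xVx).
  apply: contraL (evenW x xVx nHx) => /subset_leq_card; rewrite card_lcoset => leWxH.
  have -> : #|W :&: dcoset x| = #|H| by apply/eqP; rewrite eqn_leq leWxH.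
  by rewrite -{2}(mul1n #|H|) dvdn_pmul2r.
have /card_gt0P[y /setIP[Wy yxV]] : (0 < #|W :&: dcoset x^-1|)%N.
  by rewrite -cardW (leq_trans (cardG_gt0 H)).
exists y; rewrite ?inE ?Wy //; apply: contra xVnx => yx.
by rewrite -(dcoset_transl x yxV) (subsetP (lcoset_sub_dcoset x)).
Qed.

Lemma lcoset_meet_invg x y :
  y \in dcoset x^-1 -> exists2 g, g \in x *: H & g^-1 \in y *: H.
Proof.
case/dcosetP=> h1 Hh1 [h2 Hh2 ->]; exists (x * h1^-1).
  by rewrite mem_lcoset mulKg groupV.
by rewrite invMg invgK; apply/lcosetP; exists h2^-1; rewrite ?groupV ?mulgK.
Qed.

Lemma pairable_inv_transversal W : pairable W ->
    {in W, forall x, x \in 'N(H) -> x ^+ 2 \in H ->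
       exists2 t, t \in x *: H & t^-1 = t} ->
  exists S, inv_transversal W S.
Proof.
have [n] := ubnP #|W|; elim: n W => // n IH W ltWn pW invW.
have [-> | [x Wx]] := set_0Vmem W.
  exists set0; split=> [|| w]; first exact: sub0set.
    by apply/setP=> u; rewrite !inE.
  by rewrite inE.
have [sWH_W _ _] := pW.
have recurse R T : R \subset W -> x \in R -> pairable R -> inv_transversal R T ->
    exists S, inv_transversal W S.
  move=> sRW Rx pR trT.
  have ltRn : #|W :\: R| < n.
    rewrite -ltnS (leq_trans _ ltWn) // ltnS proper_card //; apply/properP.
    by split; [apply: subsetDl | exists x; rewrite ?inE ?Rx].
  have sWRW : {subset W :\: R <= W} by move=> u /setDP[].
  have [S trS] := IH _ ltRn (pairableD sRW pW pR) (sub_in1 sWRW invW).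
  by exists (T :|: S); apply: inv_transversalU trT trS; case: pR.
have [/andP[nHx x2] | notInv] := boolP ((x \in 'N(H)) && (x ^+ 2 \in H)).
  have [t tx tV] := invW x Wx nHx x2.
  apply: recurse (lcoset_subset sWH_W Wx) (lcoset_refl H x) _ _.
    exact: pairable_lcoset.
  exact: inv_transversal_lcoset tx tV.
have [y /setIP[Wy yxV] nyx] := pairable_partner pW Wx notInv.
have [g gx gVy] := lcoset_meet_invg yxV.
apply: recurse (x *: H :|: y *: H) _ _ _ (pairable_lcosetU yxV nyx) _.
- by rewrite subUset !lcoset_subset.
- by rewrite inE lcoset_refl.
exact: inv_transversal_lcosetU nyx gx gVy.
Qed.

Lemma invg_lcoset_norm a : a \in 'N(H) -> a ^+ 2 \in H -> (a *: H)^-1 = a *: H.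
Proof.
move=> nHa a2; rewrite invg_lcoset norm_rlcoset ?groupV //.
by apply/lcoset_eqP; rewrite mem_lcoset_invg.
Qed.

Lemma inv_transversal_involution W S a : inv_transversal W S -> a \in W ->
  a \in 'N(H) -> a ^+ 2 \in H -> exists2 t, t \in a *: H & t^-1 = t.
Proof.
move=> [_ SV cardS] Wa nHa a2; have /eqP/cards1P[t St] := cardS a Wa.
have /setIP[tS ta] : t \in S :&: a *: H by rewrite St set11.
exists t => //; apply/set1P; rewrite -St inE -{1}SV -(invg_lcoset_norm nHa a2).
by rewrite !mem_invg !invgK tS.
Qed.

Lemma involution_of_complement a (K : {group gT}) :
  a \in 'N(H) -> a ^+ 2 \in H -> K \in [complements to H in H <*> <[a]>] ->
  exists2 t, t \in a *: H & t^-1 = t.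
Proof.
move=> nHa a2 /complP[tiHK defHa].
have /mulsgP[h k Hh Kk aE] : a \in H * K.
  by rewrite defHa (subsetP (joing_subr _ _)) ?cycle_id.
have kE : k = h^-1 * a by rewrite aE mulKg.
have ka : k \in a *: H by rewrite mem_lcoset kE -conjgE memJ_norm ?groupV.
have k2 : k ^+ 2 \in H.
  by rewrite -mem_lcoset_invg (lcoset_eqP ka) -(invg_lcoset_norm nHa a2) mem_invg invgK.
have : k ^+ 2 \in H :&: K by rewrite inE k2 groupX.
rewrite tiHK expgS expg1 => /set1gP kk1.
by exists k => //; apply/eqP; rewrite eq_invg_mul kk1.
Qed.

Lemma complement_of_involution a t : a \in 'N(H) -> a \notin H ->
  t \in a *: H -> t^-1 = t -> <[t]>%G \in [complements to H in H <*> <[a]>].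
Proof.
move=> nHa notHa ta tV; have [h Hh tE] := lcosetP ta.
have nHt : t \in 'N(H) by rewrite tE groupM // (subsetP (normG H)).
have notHt : t \notin H by rewrite tE groupMr.
have ot : #[t] = 2.
  apply/prime_nt_dvdP => //; first by rewrite order_eq1; apply: contraNneq notHt => ->.
  by rewrite order_dvdn expgS expg1 -{1}tV mulVg eqxx.
apply/complP; split=> /=; first by rewrite setIC prime_TIg ?cycle_subG // -orderE ot.
rewrite -norm_joinEr ?cycle_subG //; apply/eqP.
rewrite eqEsubset !join_subG !joing_subl !cycle_subG /= !joingE.
have aE : a = t * h^-1 by rewrite tE mulgK.
apply/andP; split; [rewrite tE | rewrite aE];
  by rewrite groupM ?groupV // mem_gen // !inE ?cycle_id ?Hh ?orbT.
Qed.

Lemma card_adj_lcoset S x : #|[set c in H | cay_adj S c x]| = #|S :&: x *: H|.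
Proof.
rewrite -(card_preimset (S :&: x *: H) (f := fun c => x * c^-1)); last first.
  by move=> c d /mulgI/invg_inj.
by apply: eq_card => c; rewrite !inE mem_lcoset mulKg groupV andbC.
Qed.

Lemma perfect_code_inv_transversal (G : {group gT}) : H \subset G ->
  subgroup_perfect_code G H <-> exists S, inv_transversal (G :\: H) S.
Proof.
move=> sHG; split=> [[S [[sSG SV] [_ indep cardS]]] | [S [sSGH SV cardS]]].
  exists S; split=> [||x GHx]; last by rewrite -card_adj_lcoset cardS.
    apply/subsetP=> s Ss; have /setD1P[_ Gs] := subsetP sSG s Ss.
    rewrite inE Gs andbT; apply: contraL Ss => Hs.
    by have := indep 1 s (group1 H) Hs; rewrite /cay_adj invg1 mulg1.
  by apply/setP=> s; rewrite mem_invg; apply/idP/idP=> /SV; rewrite ?invgK.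
exists S; split; first split.
- apply: subset_trans sSGH _; apply/subsetP=> s /setDP[Gs notHs].
  by rewrite !inE Gs andbT; apply: contraNneq notHs => ->.
- by move=> s Ss; rewrite -SV mem_invg invgK.
split=> // [c c' Hc Hc' | x GHx]; last by rewrite card_adj_lcoset cardS.
by apply/negP=> /(subsetP sSGH)/setDP[_]; rewrite groupM ?groupV.
Qed.

End PerfectCode.

Theorem theorem3p1 (gT : finGroupType) (G H : {group gT}) :
  H \subset G -> 2.-group H ->
  (subgroup_perfect_code G H <->
   (forall a : gT, a \in 'N_G(H) :\: H -> a ^+ 2 \in H ->
      exists K : {group gT}, K \in [complements to H in H <*> <[a]>])).
Proof.
move=> sHG pH; split=> [/(perfect_code_inv_transversal sHG)[S trS] | complH].
  move=> a /setDP[/setIP[Ga nHa] notHa] a2.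
  have GHa : a \in G :\: H by rewrite inE notHa Ga.
  have [t ta tV] := inv_transversal_involution trS GHa nHa a2.
  by exists <[t]>%G; apply: complement_of_involution ta tV.
apply/(perfect_code_inv_transversal sHG).
apply: pairable_inv_transversal (pairable_setD sHG pH) _.
move=> a /setDP[Ga notHa] nHa a2.
have NHa : a \in 'N_G(H) :\: H by rewrite inE notHa; apply/setIP.
have [K complK] := complH a NHa a2.
exact: involution_of_complement complK.
Qed.
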